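(* For all names $\vec u,\vec v,\vec w$ (of degrees $\ge1$): $\vec u\dotplus\vec v=\vec u\dotplus\vec w$ if and only if $\vec v=\vec w$, and $\vec v\dotplus\vec u=\vec w\dotplus\vec u$ if and only if $\vec v=\vec w$.
   Context: $\hat N^n$ ($n\ge1$) is the set of names of planar rooted binary trees with $n$ internal vertices: writing a tree as a complete expression (full binary parenthesization, outermost product included) of $x_1\cdots x_{n+1}$, its name $\vec v\in\mathbb N^n$ has $v_i=i$ if at least one left parenthesis stands immediately left of $x_i$, and otherwise $v_i=j$ where the rightmost of the right parentheses immediately following $x_i$ matches a left parenthesis in the run immediately preceding $x_j$. For $\vec v\in\hat N^n,\vec w\in\hat N^m$: $\vec v\nearrow\vec w=(\vec v,n\triangleright w_1,\dots,n\triangleright w_m)$ with $n\triangleright a=a+n$ for $a\neq1$, $n\triangleright1=1$; $\vec v\nwarrow\vec w=(v_1,\dots,v_n,w_1+n,\dots,w_m+n)$. The dendriform addition is the set (grove) $\vec v\dotplus\vec w=\{\vec t\in\hat N^{n+m}:\ \vec v\nearrow\vec w\le\vec t\le\vec v\nwarrow\vec w\}$, with componentwise order. *)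

From mathcomp Require Import all_boot.
Set Implicit Arguments. Unset Strict Implicit. Unset Printing Implicit Defensive.

Inductive tree := Leaf | Node of tree & tree.

Fixpoint internal (t : tree) : nat :=
  match t with Leaf => 0 | Node l r => (internal l + internal r).+1 end.

Inductive tok := LP | RP | X.
Definition is_LP (a : tok) := if a is LP then true else false.
Definition is_RP (a : tok) := if a is RP then true else false.
Definition is_X  (a : tok) := if a is X then true else false.

(* Complete expression (full parenthesization, outermost product included)
   of x_1 ... x_(n+1) with the shape of t. *)
Fixpoint expr (t : tree) : seq tok :=
  match t with
  | Leaf => [:: X]
  | Node l r => LP :: expr l ++ expr r ++ [:: RP]
  end.

(* 0-based position in s of the variable x_i (i >= 1). *)
Definition xpos (s : seq tok) (i : nat) : nat :=
  nth 0 [seq p <- iota 0 (size s) | is_X (nth X s p)] i.-1.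

Definition cntL (s : seq tok) (p : nat) := count is_LP (take p s).
Definition cntR (s : seq tok) (p : nat) := count is_RP (take p s).

(* position of the left parenthesis matching the right parenthesis at q *)
Definition match_left (s : seq tok) (q : nat) : nat :=
  last 0 [seq q' <- iota 0 q | is_LP (nth X s q') &&
            (cntL s q' + cntR s q + 1 == cntL s q + cntR s q')].

(* the entry v_i of the name, following the paper's definition literally *)
Definition name_entry (s : seq tok) (i : nat) : nat :=
  let p := xpos s i in
  if (0 < p) && is_LP (nth X s p.-1) then i
  else
    (* rightmost right parenthesis in the run immediately following x_i *)
    let q := p + find (fun a => ~~ is_RP a) (drop p.+1 s) in
    (* index j of the variable immediately after the run containing the
       matching left parenthesis *)
    (count is_X (take (match_left s q) s)).+1.

Definition name (t : tree) : seq nat :=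
  [seq name_entry (expr t) i | i <- iota 1 (internal t)].

Definition hatN (n : nat) (v : seq nat) : Prop :=
  exists t : tree, internal t = n /\ name t = v.

Definition tri (n a : nat) : nat := if a == 1 then 1 else a + n.

Definition nearrow (v w : seq nat) : seq nat :=
  v ++ [seq tri (size v) a | a <- w].
Definition nwarrow (v w : seq nat) : seq nat :=
  v ++ [seq a + size v | a <- w].

Definition cwle (a b : seq nat) : bool := all2 leq a b.

Definition dotplus (v w : seq nat) (t : seq nat) : Prop :=
  hatN (size v + size w) t /\ cwle (nearrow v w) t /\ cwle t (nwarrow v w).

Example ex1 : name (Node (Node Leaf Leaf) Leaf) = [:: 1; 1]. Proof. by []. Qed.
Example ex2 : name (Node Leaf (Node Leaf Leaf)) = [:: 1; 2]. Proof. by []. Qed.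
Example ex3 : name (Node (Node Leaf (Node Leaf Leaf)) (Node Leaf Leaf)) = [:: 1; 2; 1; 4].
Proof. by []. Qed.

From mathcomp Require Import all_boot zify.
Set Implicit Arguments. Unset Strict Implicit. Unset Printing Implicit Defensive.

(** Grafting the root of [s] onto the rightmost leaf of [t] gives a tree named
    [nwarrow (name t) (name s)].  As [nwarrow v w] is the componentwise maximum of
    the grove [dotplus v w], it belongs to it, so a grove determines its maximum.
    If [u ∔ v = u ∔ w], the maxima [u ↖ v] and [u ↖ w] bound each other, and their
    tails give [v = w].  If [v ∔ u = w ∔ u], the maximum [v ↖ u] lies in [w ∔ u],
    which forces [|v| = |w|], and comparing the prefixes of the two maxima gives [v = w].

    Most of the work is the recursion
    [name (Node l r) = name l ++ 1 :: (name r shifted by |l| + 1)], read off the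
    token-level definition of names: the entries of a subtree are translated by the
    number of variables to its left, and the last leaf of [l] gets [1] because the
    run of right parentheses after it closes [l], which opens right after the root. *)

Section SeqConcat.
Variable T : Type.
Implicit Types (A B E s : seq T) (P : pred T).

Lemma nth_cat_size (x : T) A s y : nth x (A ++ s) (size A + y) = nth x s y.
Proof. by rewrite nth_cat ltnNge leq_addr addKn. Qed.

Lemma drop_cat_size A s y : drop (size A + y) (A ++ s) = drop y s.
Proof. by rewrite drop_cat ltnNge leq_addr addKn. Qed.

Lemma count_take_cat P A B y :
  count P (take y (A ++ B)) = count P (take y A) + count P (take (y - size A) B).
Proof.
rewrite take_cat; case: ltnP => hy; last by rewrite count_cat (take_oversize hy).
have -> : y - size A = 0 by lia.
by rewrite take0 addn0.
Qed.

Lemma count_take_shift P A E B y : y <= size E ->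
  count P (take (size A + y) (A ++ E ++ B)) = count P A + count P (take y E).
Proof.
move=> hy; rewrite count_take_cat take_oversize ?leq_addr // addKn count_take_cat.
have -> : y - size E = 0 by lia.
by rewrite take0 addn0.
Qed.

Lemma find_cat_head (x : T) P D B : has P D || P (head x B) ->
  find P (D ++ B) = find P D.
Proof.
rewrite find_cat; case: ifP => //= /negbT/hasNfind ->.
by case: B => [|b B] /= => [|->]; rewrite addn0.
Qed.

End SeqConcat.

Definition var_pos (s : seq tok) := [seq p <- iota 0 (size s) | is_X (nth X s p)].

Lemma xposE s i : xpos s i = nth 0 (var_pos s) i.-1.
Proof. by []. Qed.

Lemma var_pos_cons c s :
  var_pos (c :: s) = (if is_X c then [:: 0] else [::]) ++ map S (var_pos s).
Proof.
rewrite /var_pos /=.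
have -> : iota 1 (size s) = map S (iota 0 (size s)) by rewrite -[1]addn0 iotaDl.
by rewrite filter_map; case: (is_X c).
Qed.

Lemma var_pos_cat A E : var_pos (A ++ E) = var_pos A ++ map (addn (size A)) (var_pos E).
Proof.
elim: A => [|c A IH] /=; first by rewrite map_id_in.
rewrite !var_pos_cons IH map_cat -map_comp -catA.
by congr (_ ++ (_ ++ _)); apply: eq_map => p /=; rewrite addSn.
Qed.

Lemma size_var_pos s : size (var_pos s) = count is_X s.
Proof. by elim: s => // c s IH; rewrite var_pos_cons size_cat size_map IH; case: c. Qed.

Lemma nth_var_pos s k : k < count is_X s ->
  [/\ nth 0 (var_pos s) k < size s, nth X s (nth 0 (var_pos s) k) = X
     & count is_X (take (nth 0 (var_pos s) k) s) = k].
Proof.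
elim: s k => [|c s IH] k //; rewrite var_pos_cons.
case: c => /=; rewrite ?add0n ?add1n;
  try by move=> hk; have [? ? ?] := IH k hk; rewrite (nth_map 0) ?size_var_pos.
case: k => [|k] //=; rewrite ltnS => hk; have [? ? hc] := IH k hk.
by rewrite (nth_map 0) ?size_var_pos //= hc.
Qed.

Lemma xpos_spec s i : 0 < i <= count is_X s ->
  [/\ xpos s i < size s, nth X s (xpos s i) = X & count is_X (take (xpos s i) s) = i.-1].
Proof. by move=> hi; apply: nth_var_pos; lia. Qed.

Lemma xpos_shift A E B i : 0 < i <= count is_X E ->
  xpos (A ++ E ++ B) (count is_X A + i) = size A + xpos E i.
Proof.
move=> hi; rewrite !xposE !var_pos_cat nth_cat size_var_pos.
have -> : (count is_X A + i).-1 = count is_X A + i.-1 by lia.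
have hi' : i.-1 < size (var_pos E) by rewrite size_var_pos; lia.
by rewrite ltnNge leq_addr addKn (nth_map 0) ?nth_cat ?hi' // size_cat ltn_addr.
Qed.

Lemma count_X_expr t : count is_X (expr t) = (internal t).+1.
Proof. by elim: t => //= l IHl r IHr; rewrite !count_cat IHl IHr /=; lia. Qed.

Lemma count_LP_expr t : count is_LP (expr t) = count is_RP (expr t).
Proof. by elim: t => //= l IHl r IHr; rewrite !count_cat IHl IHr /=; lia. Qed.

Lemma prefix_RP_le_LP t y :
  count is_RP (take y (expr t)) <= count is_LP (take y (expr t)).
Proof.
elim: t y => [|l IHl r IHr] [|y] //=; rewrite !count_take_cat.
have := IHl y; have := IHr (y - size (expr l)).
by case: (_ - _ - _) => [|[]] /=; lia.
Qed.

Lemma prefix_RP_lt_LP t y : 0 < y < size (expr t) ->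
  count is_RP (take y (expr t)) < count is_LP (take y (expr t)).
Proof.
case: t => [|l r]; first by case: y => [|[]].
case: y => [|y] //=; rewrite !size_cat /= ltnS => hy.
rewrite !count_take_cat.
have -> : y - size (expr l) - size (expr r) = 0 by lia.
rewrite take0 /=.
have := prefix_RP_le_LP l y; have := prefix_RP_le_LP r (y - size (expr l)); lia.
Qed.

Lemma head_expr t : 0 < internal t -> nth X (expr t) 0 = LP.
Proof. by case: t. Qed.

Lemma last_expr c t : ~~ is_LP (last c (expr t)).
Proof. by case: t => //= l r; rewrite !last_cat. Qed.

Lemma expr_last_leaf t : 0 < internal t -> exists E k,
  [/\ expr t = E ++ X :: nseq k.+1 RP, count is_X E = internal t & ~~ is_LP (last X E)].
Proof.
elim: t => // l _ r IHr _; case: r IHr => [|a b] IHr.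
  by exists (LP :: expr l), 0; split; rewrite //= ?count_X_expr ?addn0 ?addn1 ?last_expr.
have [E [k [eE cE lE]]] := IHr isT; exists (LP :: expr l ++ E), k.+1; split.
- rewrite -[expr (Node l _)]/(LP :: expr l ++ expr (Node a b) ++ [:: RP]) eE.
  by rewrite -!catA cat_cons -[[:: RP]]/(nseq 1 RP) -nseqD addn1 /= -catA.
- by rewrite -cat_cons count_cat cE /= count_X_expr; lia.
- by case: E {eE} cE lE => [|e E] //= _; rewrite last_cat.
Qed.

Lemma leaf_neighbour A B t p : 0 < internal t ->
  p < size (expr t) -> nth X (expr t) p = X ->
  is_LP (nth X (A ++ expr t ++ B) (size A + p).-1) ||
  is_RP (nth X (A ++ expr t ++ B) (size A + p).+1).
Proof.
elim: t A B p => [|l IHl r IHr] A B [|p] //= _.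
rewrite !size_cat /= ltnS => hp; case: (ltnP p (size (expr l))) => hpl.
  rewrite nth_cat hpl => hX; case: l IHl hpl hX {hp} => [|a b] IHl hpl hX.
    have -> : p = 0 by move: hpl => /=; lia.
    by rewrite addn1 /= nth_cat ltnn subnn.
  have -> : A ++ LP :: (expr (Node a b) ++ expr r ++ [:: RP]) ++ B =
            (A ++ [:: LP]) ++ expr (Node a b) ++ (expr r ++ RP :: B).
    by rewrite -!catA.
  have -> : size A + p.+1 = size (A ++ [:: LP]) + p by rewrite size_cat /=; lia.
  exact: IHl.
rewrite nth_cat ltnNge hpl /= => hX.
case: (ltnP (p - size (expr l)) (size (expr r))) => hpr; last first.
  move: hX; rewrite nth_cat ltnNge hpr /=.
  by have -> : p - size (expr l) - size (expr r) = 0 by lia.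
rewrite nth_cat hpr in hX; case: r IHr hpr hX {hp} => [|a b] IHr hpr hX.
  have -> : size A + p.+1 = size (A ++ LP :: expr l) + 0.
    by rewrite size_cat /=; move: hpr => /=; lia.
  have -> : A ++ LP :: (expr l ++ expr Leaf ++ [:: RP]) ++ B =
            (A ++ LP :: expr l) ++ [:: X, RP & B] by rewrite -!catA.
  by rewrite addn0 -addn1 nth_cat_size orbT.
have -> : A ++ LP :: (expr l ++ expr (Node a b) ++ [:: RP]) ++ B =
          (A ++ LP :: expr l) ++ expr (Node a b) ++ (RP :: B).
  by rewrite -!catA.
have -> : size A + p.+1 = size (A ++ LP :: expr l) + (p - size (expr l)).
  by rewrite size_cat /=; lia.
exact: IHr.
Qed.

(** * Matching parentheses *)

(* The depth before the left parenthesis at [y] equals the depth after the right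
   parenthesis at [q]. *)
Definition matches (s : seq tok) (q y : nat) : bool :=
  is_LP (nth X s y) && (cntL s y + cntR s q + 1 == cntL s q + cntR s y).

Lemma match_leftE s q : match_left s q = last 0 [seq y <- iota 0 q | matches s q y].
Proof. by []. Qed.

Lemma matches_shift A E B q y : q <= size E -> y < size E ->
  matches (A ++ E ++ B) (size A + q) (size A + y) = matches E q y.
Proof.
move=> hq hy; rewrite /matches /cntL /cntR nth_cat_size nth_cat hy.
rewrite !count_take_shift ?(ltnW hy) //; case: (is_LP _) => //=.
by apply/eqP/eqP => h; lia.
Qed.

Lemma depth_before_root_RP l r (q := (size (expr l) + size (expr r)).+1) :
  cntL (expr (Node l r)) q = (cntR (expr (Node l r)) q).+1.
Proof.
have -> : expr (Node l r) = (LP :: expr l ++ expr r) ++ [:: RP] by rewrite /= -catA.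
rewrite /q -size_cat /cntL /cntR /= take_size_cat // !count_cat.
by rewrite count_LP_expr [count is_LP (expr r)]count_LP_expr.
Qed.

Lemma matches_outer l r :
  matches (expr (Node l r)) (size (expr l) + size (expr r)).+1 0.
Proof. by rewrite /matches depth_before_root_RP /cntL /cntR take0 /= add0n addn0 addn1. Qed.

Lemma has_matches_shift A E B q : q < size E ->
  has (matches E q) (iota 0 q) ->
  has (matches (A ++ E ++ B) (size A + q)) (iota 0 (size A + q)).
Proof.
move=> hq /hasP[y]; rewrite mem_iota => hy hm; apply/hasP; exists (size A + y).
  by rewrite mem_iota; lia.
by rewrite matches_shift //; lia.
Qed.

Lemma exists_match t q : q < size (expr t) -> nth X (expr t) q = RP ->
  has (matches (expr t) q) (iota 0 q).
Proof.
elim: t q => [|l IHl r IHr] [|q] //; rewrite [expr _]/= => hq hRP.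
rewrite /= !size_cat /= in hq hRP.
case: (ltnP q (size (expr l))) => hql.
  rewrite nth_cat hql in hRP.
  exact: (has_matches_shift [:: LP] (expr r ++ [:: RP]) hql (IHl _ hql hRP)).
rewrite nth_cat ltnNge hql /= in hRP.
case: (ltnP (q - size (expr l)) (size (expr r))) => hqr.
  rewrite nth_cat hqr in hRP.
  have := has_matches_shift (LP :: expr l) [:: RP] hqr (IHr _ hqr hRP).
  by rewrite /= addSn subnKC.
have -> : q = size (expr l) + size (expr r) by lia.
by apply/hasP; exists 0; [rewrite mem_iota | apply: matches_outer].
Qed.

Lemma match_left_lt s q : has (matches s q) (iota 0 q) -> match_left s q < q.
Proof.
rewrite match_leftE has_filter; case e: (filter _ _) => [|y ys] // _.
have : last y ys \in filter (matches s q) (iota 0 q) by rewrite e mem_last.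
by rewrite mem_filter mem_iota => /and3P[].
Qed.

Lemma match_left_shift A E B q : q < size E -> has (matches E q) (iota 0 q) ->
  match_left (A ++ E ++ B) (size A + q) = size A + match_left E q.
Proof.
move=> hq; rewrite !match_leftE iotaD filter_cat add0n.
have -> : iota (size A) q = map (addn (size A)) (iota 0 q) by rewrite -iotaDl addn0.
rewrite filter_map has_filter.
have -> : [seq y <- iota 0 q | preim (addn (size A)) (matches (A ++ E ++ B) (size A + q)) y]
          = [seq y <- iota 0 q | matches E q y].
  by apply: eq_in_filter => y; rewrite mem_iota /= => hy; apply: matches_shift; lia.
by case: (filter _ _) => [|y ys] //= _; rewrite last_cat /= last_map.
Qed.

Lemma is_RP_eq a : is_RP a -> a = RP.
Proof. by case: a. Qed.

Lemma RP_nth_lt s k : is_RP (nth X s k) -> k < size s.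
Proof. by apply: contraLR; rewrite -leqNgt => /(nth_default X) ->. Qed.

Lemma RP_run_end s p : is_RP (nth X s p.+1) ->
  let q := p + find (fun a => ~~ is_RP a) (drop p.+1 s) in
  q < size s /\ nth X s q = RP.
Proof.
move=> hR; set f := find _ _.
have f0 : 0 < f by rewrite /f (drop_nth X (RP_nth_lt hR)) /= hR.
have : is_RP (nth X (drop p.+1 s) f.-1).
  by apply/negbFE; apply: (@before_find _ X (fun a => ~~ is_RP a)); rewrite prednK.
by rewrite nth_drop addSnnS prednK // => hq; split; [apply: RP_nth_lt | apply: is_RP_eq].
Qed.

Lemma has_X_after s i : 0 < i < count is_X s -> has is_X (drop (xpos s i).+1 s).
Proof.
move=> hi; have [|hp hX hc] := @xpos_spec s i; first lia.
rewrite has_count; move: (count_cat is_X (take (xpos s i).+1 s) (drop (xpos s i).+1 s)).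
by rewrite cat_take_drop (take_nth X hp) -cats1 count_cat hc hX /=; lia.
Qed.

(** * The recursion for names *)

(* For the last leaf of [t], the run of right parentheses following it must not
   continue into [B]. *)
Lemma name_entry_shift A B t i : 0 < internal t -> 0 < i <= (internal t).+1 ->
  (i <= internal t) || ~~ is_RP (head X B) ->
  name_entry (A ++ expr t ++ B) (count is_X A + i) = count is_X A + name_entry (expr t) i.
Proof.
set E := expr t => ht hi hB.
have [|hp hpX hpc] := @xpos_spec E i; first by rewrite count_X_expr.
set p := xpos E i in hp hpX hpc *.
have p0 : 0 < p by case: p hpX {hp hpc} => //; rewrite head_expr.
rewrite /name_entry xpos_shift ?count_X_expr // -/p.
have -> : (size A + p).-1 = size A + p.-1 by lia.
have hp1 : p.-1 < size E by lia.
rewrite nth_cat_size nth_cat hp1 addn_gt0 p0 orbT /=; case: ifP => // notLP.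
have hR : is_RP (nth X E p.+1).
  by have := leaf_neighbour [::] [::] ht hp hpX; rewrite cats0 /= notLP.
have hfind : find (fun a => ~~ is_RP a) (drop p.+1 E ++ B) =
             find (fun a => ~~ is_RP a) (drop p.+1 E).
  apply: (@find_cat_head _ X (fun a => ~~ is_RP a)).
  case/orP: hB => [hiE | ->]; last exact: orbT.
  by apply/orP; left; apply: sub_has (has_X_after _); [case | rewrite count_X_expr; lia].
have [hq hqR] := RP_run_end hR.
have hm := exists_match hq hqR.
rewrite -addnS drop_cat_size drop_cat (RP_nth_lt hR) hfind -addnA match_left_shift //.
by rewrite count_take_shift ?addnS // ltnW // (ltn_trans (match_left_lt hm) hq).
Qed.

Lemma name_entry_shift_inner A B t i : 0 < i <= internal t ->
  name_entry (A ++ expr t ++ B) (count is_X A + i) = count is_X A + name_entry (expr t) i.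
Proof. by move=> /andP[i0 hi]; apply: name_entry_shift; rewrite ?hi //; lia. Qed.

Lemma match_left_root l r :
  match_left (expr (Node l r)) (size (expr l) + size (expr r)).+1 = 0.
Proof.
rewrite match_leftE [iota 0 _]/= [filter _ _]/= matches_outer.
have -> : [seq y <- iota 1 (size (expr l) + size (expr r)) | matches (expr (Node l r))
            (size (expr l) + size (expr r)).+1 y] = [::].
  apply/eqP; rewrite -[_ == _]negbK -has_filter; apply/hasPn => y.
  rewrite mem_iota => hy; rewrite /matches depth_before_root_RP /cntL /cntR.
  have := @prefix_RP_lt_LP (Node l r) y; rewrite [size _]/= !size_cat /=.
  by move=> /(_ ltac:(lia)) hlt; apply/nandP; right; apply/eqP; lia.
by [].
Qed.

Lemma name_entry_last t : name_entry (expr t) (internal t).+1 = 1.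
Proof.
case: t => [|l r] //; have [E [k [eE cE lE]]] := @expr_last_leaf (Node l r) isT.
have E0 : 0 < size E by move: cE; case: E {eE lE}.
have hsize : (size (expr l) + size (expr r)).+1 = size E + k.+1.
  by move: (congr1 size eE); rewrite /= !size_cat /= size_nseq; lia.
have hx : xpos (expr (Node l r)) (internal (Node l r)).+1 = size E.
  by rewrite xposE eE var_pos_cat var_pos_cons /= nth_cat size_var_pos cE ltnn subnn addn0.
have hprev : nth X (expr (Node l r)) (size E).-1 = last X E.
  by rewrite eE nth_cat ltn_predL E0 nth_last.
have hdrop : drop (size E).+1 (expr (Node l r)) = nseq k.+1 RP.
  by rewrite eE -addn1 drop_cat_size.
rewrite /name_entry hx hprev (negbTE lE) andbF hdrop find_nseq /= mul1n -hsize.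
by rewrite match_left_root take0.
Qed.

Lemma name_entry_root l r : name_entry (expr (Node l r)) (internal l).+1 = 1.
Proof.
case: l => [|a b]; first by rewrite /name_entry xposE [expr _]/= !var_pos_cons.
rewrite -[expr (Node _ r)]/([:: LP] ++ expr (Node a b) ++ (expr r ++ [:: RP])).
rewrite -[(internal _).+1]/(count is_X [:: LP] + (internal (Node a b)).+1).
by rewrite name_entry_shift ?name_entry_last ?leqnn ?ltnn //; case: r.
Qed.

Lemma name_node l r :
  name (Node l r) = name l ++ 1 :: map (addn (internal l).+1) (name r).
Proof.
rewrite /name [internal (Node l r)]/= -addnS iotaD map_cat; congr (_ ++ _).
  apply/eq_in_map => i; rewrite mem_iota => hi.
  exact: (name_entry_shift_inner [:: LP] (expr r ++ [:: RP]) hi).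
rewrite add1n /= name_entry_root; congr (_ :: _).
rewrite -[(internal l).+2]addn1 iotaDl -!map_comp.
apply/eq_in_map => i; rewrite mem_iota => hi /=.
have := name_entry_shift_inner (LP :: expr l) [:: RP] hi.
by rewrite [count _ (_ :: _)]/= count_X_expr; apply.
Qed.

(** * Groves *)

Fixpoint graft (t s : tree) : tree :=
  match t with Leaf => s | Node l r => Node l (graft r s) end.

Lemma internal_graft t s : internal (graft t s) = internal t + internal s.
Proof. by elim: t => //= l _ r ->; rewrite addnA addSn. Qed.

Lemma size_name t : size (name t) = internal t.
Proof. by rewrite size_map size_iota. Qed.

Lemma name_graft t s : name (graft t s) = nwarrow (name t) (name s).
Proof.
rewrite /nwarrow size_name; elim: t => [|l _ r IH].
  by rewrite map_id_in // => a _; rewrite addn0.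
rewrite [graft _ _]/= !name_node IH map_cat -map_comp -catA [internal (Node l r)]/=.
by congr (_ ++ _ :: _ ++ _); apply: eq_map => a /=; lia.
Qed.

Lemma size_hatN n v : hatN n v -> size v = n.
Proof. by case=> t [<- <-]; rewrite size_name. Qed.

Lemma cwle_refl s : cwle s s.
Proof. by elim: s => //= a s ->; rewrite leqnn. Qed.

Lemma cwle_anti s t : cwle s t -> cwle t s -> s = t.
Proof.
elim: s t => [|a s IH] [|b t] //= /andP[hab hst] /andP[hba hts].
by rewrite (IH t hst hts) (@anti_leq a b) ?hab.
Qed.

Lemma cwle_cat s s' t t' : size s = size s' ->
  cwle (s ++ t) (s' ++ t') = cwle s s' && cwle t t'.
Proof. by elim: s s' => [|a s IH] [|a' s'] //= [/IH ->]; rewrite andbA. Qed.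

Lemma cwle_map_addn n s t :
  cwle [seq a + n | a <- s] [seq a + n | a <- t] = cwle s t.
Proof. by elim: s t => [|a s IH] [|b t] //=; rewrite leq_add2r IH. Qed.

Lemma cwle_nwarrow u u' v w : size u = size u' ->
  cwle (nwarrow u v) (nwarrow u' w) = cwle u u' && cwle v w.
Proof. by move=> e; rewrite /nwarrow cwle_cat // e cwle_map_addn. Qed.

Lemma cwle_nearrow_nwarrow v w : cwle (nearrow v w) (nwarrow v w).
Proof.
rewrite /nearrow cwle_cat // cwle_refl /=.
by elim: w => //= a w ->; rewrite /tri; case: eqP => [->|]; rewrite ?leqnn ?addn1.
Qed.

Lemma dotplus_nwarrow n m v w : hatN n v -> hatN m w -> dotplus v w (nwarrow v w).
Proof.
case=> [tv [_ <-]] [tw [_ <-]]; split.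
  by exists (graft tv tw); rewrite internal_graft !size_name name_graft.
by split; [apply: cwle_nearrow_nwarrow | apply: cwle_refl].
Qed.

Unset Implicit Arguments.

Theorem mainTheorem14 (n m k : nat) (u v w : seq nat) :
  1 <= n -> 1 <= m -> 1 <= k ->
  hatN n u -> hatN m v -> hatN k w ->
  ((forall t, dotplus u v t <-> dotplus u w t) <-> v = w) /\
  ((forall t, dotplus v u t <-> dotplus w u t) <-> v = w).
Proof.
move=> _ _ _ hu hv hw; split; split => [H | -> //].
- have [_ [_ hvw]] := (H _).1 (dotplus_nwarrow hu hv).
  have [_ [_ hwv]] := (H _).2 (dotplus_nwarrow hu hw).
  move: hvw hwv; rewrite !cwle_nwarrow // => /andP[_ hvw] /andP[_ hwv].
  exact: cwle_anti.
- have [hsize [_ hvw]] := (H _).1 (dotplus_nwarrow hv hu).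
  have [_ [_ hwv]] := (H _).2 (dotplus_nwarrow hw hu).
  have e : size v = size w.
    by move: (size_hatN hsize); rewrite size_cat size_map => /addIn.
  move: hvw hwv; rewrite !cwle_nwarrow // => /andP[hvw _] /andP[hwv _].
  exact: cwle_anti.
Qed.
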